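(* Let $\mathcal{C}$ be a category (no limits or colimits are assumed to exist). For every internal groupoid $(C_0,C_1,C_2,d,c,e,m,\pi_1,\pi_2,i)$ in $\mathcal{C}$, define $\theta=\langle i\pi_1,m\rangle\colon C_2\to C_2$ and $\varphi=\langle m,i\pi_2\rangle\colon C_2\to C_2$. Then $(\theta,\varphi,m\colon C_2\to C_1)$ is an involutive-2-link, and it satisfies $m\varphi=\pi_1$, $m\theta=\pi_2$, $\pi_1\varphi=m$, $\pi_1\theta=i\pi_1$, $\pi_2\varphi=i\pi_2$, $\pi_2\theta=m$. Moreover, the assignment sending such an internal groupoid to $(\theta,\varphi,m)$ and an internal functor $(f_0,f_1,f_2)$ to $f_1$ is a well-defined functor from the category of internal groupoids in $\mathcal{C}$ to the category of involutive-2-links in $\mathcal{C}$, and this functor is fully faithful.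
   Context: Notation: for morphisms $x,y\colon X\to C_1$ with $dx=cy$, $\langle x,y\rangle\colon X\to C_2$ denotes the unique morphism with $\pi_1\langle x,y\rangle=x$, $\pi_2\langle x,y\rangle=y$ (using the pullback below). Internal groupoid in a category $\mathcal{C}$: objects $C_0,C_1,C_2$ and morphisms $d,c\colon C_1\to C_0$, $e\colon C_0\to C_1$, $m,\pi_1,\pi_2\colon C_2\to C_1$, $i\colon C_1\to C_1$ such that: $de=1_{C_0}=ce$; $dm=d\pi_2$, $cm=c\pi_1$, $d\pi_1=c\pi_2$; $di=c$, $ci=d$, $i^2=1_{C_1}$, $ie=e$; the commutative square $d\pi_1=c\pi_2$ is a pullback square; $m\langle 1_{C_1},ed\rangle=1_{C_1}=m\langle ec,1_{C_1}\rangle$; $m\langle 1_{C_1},i\rangle=ec$ and $m\langle i,1_{C_1}\rangle=ed$; the cospan $d\pi_2\colon C_2\to C_0$, $c\colon C_1\to C_0$ can be completed to a pullback square $d\pi_2 p_1=c\,p_2$ with $p_1\colon C_3\to C_2$, $p_2\colon C_3\to C_1$; and $m(1\times m)=m(m\times 1)$, where $m\times 1=\langle mp_1,p_2\rangle\colon C_3\to C_2$ and $1\times m=\langle \pi_1p_1, m\langle\pi_2p_1,p_2\rangle\rangle\colon C_3\to C_2$. A morphism of internal groupoids (internal functor) is a triple $(f_0\colon C_0\to C_0',f_1\colon C_1\to C_1',f_2\colon C_2\to C_2')$ commuting with all the structure morphisms $d,c,e,m,\pi_1,\pi_2$ (and hence $i$). Involutive-2-link in $\mathcal{C}$: a triple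 $(\theta,\varphi,m)$ where $m\colon A\to B$ is a morphism and $\theta,\varphi\colon A\to A$ satisfy $\theta^2=\varphi^2=1_A$ and $\theta\varphi\theta=\varphi\theta\varphi$, and such that the three parallel morphisms $m,m\theta,m\varphi\colon A\to B$ are jointly monomorphic. A morphism from $(\theta,\varphi,m\colon A\to B)$ to $(\theta',\varphi',m'\colon A'\to B')$ is a morphism $f\colon B\to B'$ for which there exists $\bar f\colon A\to A'$ with $m'\bar f=fm$, $\theta'\bar f=\bar f\theta$, $\varphi'\bar f=\bar f\varphi$ (such $\bar f$ is then unique); composition is composition of the $f$'s. *)

Record Category := {
  Ob :> Type;
  Hom : Ob -> Ob -> Type;
  comp : forall {A B C : Ob}, Hom B C -> Hom A B -> Hom A C;
  idm : forall (A : Ob), Hom A A;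
  comp_assoc : forall (A B C D : Ob) (h : Hom C D) (g : Hom B C) (f : Hom A B),
      comp h (comp g f) = comp (comp h g) f;
  comp_id_l : forall (A B : Ob) (f : Hom A B), comp (idm B) f = f;
  comp_id_r : forall (A B : Ob) (f : Hom A B), comp f (idm A) = f
}.

Arguments Hom {c} _ _.
Arguments comp {c A B C} _ _.
Arguments idm {c} _.

Notation "g ∘ f" := (comp g f) (at level 40, left associativity).

Definition is_pullback {C : Category} {A B Z P : C}
  (f : Hom A Z) (g : Hom B Z) (p : Hom P A) (q : Hom P B) : Prop :=
  f ∘ p = g ∘ q /\
  forall (X : C) (x : Hom X A) (y : Hom X B), f ∘ x = g ∘ y ->
    exists! h : Hom X P, p ∘ h = x /\ q ∘ h = y.

(* The pairing <x,y> : X -> C2 (the unique morphism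
   with pi1<x,y> = x, pi2<x,y> = y, which exists by the pullback property) is
   used in the axioms through its defining equations: an equation
   "F(<x,y>) = G" is written "forall u, pi1 u = x -> pi2 u = y -> F u = G". *)
Record InternalGroupoid (C : Category) := {
  C0 : C; C1 : C; C2 : C;
  gd : Hom C1 C0; gc : Hom C1 C0; ge : Hom C0 C1;
  gm : Hom C2 C1; gp1 : Hom C2 C1; gp2 : Hom C2 C1;
  gi : Hom C1 C1;
  ax_de : gd ∘ ge = idm C0;
  ax_ce : gc ∘ ge = idm C0;
  ax_dm : gd ∘ gm = gd ∘ gp2;
  ax_cm : gc ∘ gm = gc ∘ gp1;
  ax_di : gd ∘ gi = gc;
  ax_ci : gc ∘ gi = gd;
  ax_ii : gi ∘ gi = idm C1;
  ax_ie : gi ∘ ge = ge;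
  ax_pb : is_pullback gd gc gp1 gp2;   (* includes d pi1 = c pi2 *)
  ax_unit_r : forall u : Hom C1 C2,
      gp1 ∘ u = idm C1 -> gp2 ∘ u = ge ∘ gd -> gm ∘ u = idm C1;
  ax_unit_l : forall u : Hom C1 C2,
      gp1 ∘ u = ge ∘ gc -> gp2 ∘ u = idm C1 -> gm ∘ u = idm C1;
  ax_inv_r : forall u : Hom C1 C2,
      gp1 ∘ u = idm C1 -> gp2 ∘ u = gi -> gm ∘ u = ge ∘ gc;
  ax_inv_l : forall u : Hom C1 C2,
      gp1 ∘ u = gi -> gp2 ∘ u = idm C1 -> gm ∘ u = ge ∘ gd;
  C3 : C; q1 : Hom C3 C2; q2 : Hom C3 C1;
  ax_pb3 : is_pullback (gd ∘ gp2) gc q1 q2;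
  (* associativity  m (1 x m) = m (m x 1)  with
     m x 1 = <m q1, q2>,  1 x m = <pi1 q1, m <pi2 q1, q2>> *)
  ax_assoc : forall (a b v : Hom C3 C2),
      gp1 ∘ a = gm ∘ q1 -> gp2 ∘ a = q2 ->
      gp1 ∘ v = gp2 ∘ q1 -> gp2 ∘ v = q2 ->
      gp1 ∘ b = gp1 ∘ q1 -> gp2 ∘ b = gm ∘ v ->
      gm ∘ b = gm ∘ a
}.

Arguments C0 {C} _. Arguments C1 {C} _. Arguments C2 {C} _.
Arguments gd {C} _. Arguments gc {C} _. Arguments ge {C} _.
Arguments gm {C} _. Arguments gp1 {C} _. Arguments gp2 {C} _.
Arguments gi {C} _.

Definition is_internal_functor {C : Category} (G G' : InternalGroupoid C)
  (f0 : Hom (C0 G) (C0 G')) (f1 : Hom (C1 G) (C1 G')) (f2 : Hom (C2 G) (C2 G'))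
  : Prop :=
  gd G' ∘ f1 = f0 ∘ gd G /\
  gc G' ∘ f1 = f0 ∘ gc G /\
  ge G' ∘ f0 = f1 ∘ ge G /\
  gm G' ∘ f2 = f1 ∘ gm G /\
  gp1 G' ∘ f2 = f1 ∘ gp1 G /\
  gp2 G' ∘ f2 = f1 ∘ gp2 G.

Definition is_inv2link {C : Category} {A B : C}
  (theta phi : Hom A A) (m : Hom A B) : Prop :=
  theta ∘ theta = idm A /\
  phi ∘ phi = idm A /\
  theta ∘ phi ∘ theta = phi ∘ theta ∘ phi /\
  (forall (X : C) (x y : Hom X A),
      m ∘ x = m ∘ y -> m ∘ theta ∘ x = m ∘ theta ∘ y ->
      m ∘ phi ∘ x = m ∘ phi ∘ y -> x = y).

Definition is_inv2link_morphism {C : Category} {A B A' B' : C}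
  (theta phi : Hom A A) (m : Hom A B)
  (theta' phi' : Hom A' A') (m' : Hom A' B') (f : Hom B B') : Prop :=
  exists fbar : Hom A A',
    m' ∘ fbar = f ∘ m /\ theta' ∘ fbar = fbar ∘ theta /\ phi' ∘ fbar = fbar ∘ phi.

Definition is_theta {C : Category} (G : InternalGroupoid C) (t : Hom (C2 G) (C2 G)) :=
  gp1 G ∘ t = gi G ∘ gp1 G /\ gp2 G ∘ t = gm G.
Definition is_phi {C : Category} (G : InternalGroupoid C) (p : Hom (C2 G) (C2 G)) :=
  gp1 G ∘ p = gm G /\ gp2 G ∘ p = gi G ∘ gp2 G.


(* Everything is proved with generalised elements: a morphism X -> C2 is
   determined by its two projections, and one exists for every composable
   pair (pullback property).
   With theta = <i pi1, m> and phi = <m, i pi2> the key identities are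
   m phi = pi1 and m theta = pi2; they make (theta, phi, m) an
   involutive-2-link whose projections pi1, pi2 are recovered from m.
   For the functor: an internal functor preserves inverses, hence f2
   commutes with theta and phi; f0 and f2 are determined by f1 (via d e = 1
   and joint monicity of pi1, pi2); and conversely a link morphism f with
   witness fbar makes fbar preserve pi1, pi2, m, which suffices to rebuild
   an internal functor with f0 = d' f e, since f e is an identity arrow. *)

Lemma comp_eq_r {C : Category} {A B Z W : C} {a : Hom B Z} {b : Hom A B} {k : Hom A Z}
  (x : Hom W A) : a ∘ b = k -> a ∘ (b ∘ x) = k ∘ x.
Proof. intros H. rewrite comp_assoc, H. reflexivity. Qed.

(* Composites are kept right-associated; [rew H] rewrites with H everywhere in
   that form. *)
Ltac right_assoc := repeat rewrite <- comp_assoc.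
Ltac rew H :=
  right_assoc; progress (repeat (first [rewrite (comp_eq_r _ H) | rewrite H]; right_assoc)).

Section Pullback.
Variables (C : Category) (A B Z P : C).
Variables (f : Hom A Z) (g : Hom B Z) (p : Hom P A) (q : Hom P B).
Hypothesis pb : is_pullback f g p q.

Lemma pullback_pairing {X : C} (x : Hom X A) (y : Hom X B) :
  f ∘ x = g ∘ y -> exists h, p ∘ h = x /\ q ∘ h = y.
Proof.
  intros H. destruct pb as [_ Hu]. destruct (Hu X x y H) as [h [Hh _]]. eauto.
Qed.

Lemma pullback_monic {X : C} (h h' : Hom X P) :
  p ∘ h = p ∘ h' -> q ∘ h = q ∘ h' -> h = h'.
Proof.
  intros H1 H2. destruct pb as [Hc Hu].
  destruct (Hu X (p ∘ h) (q ∘ h)) as [k [_ Hk]].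
  { rewrite !comp_assoc, Hc. reflexivity. }
  transitivity k; [symmetry|]; apply Hk; split; auto.
Qed.

End Pullback.

Arguments pullback_pairing {C A B Z P f g p q} pb {X} x y.
Arguments pullback_monic {C A B Z P f g p q} pb {X} h h'.

Section Groupoid.
Variables (C : Category) (G : InternalGroupoid C).
Local Notation d := (gd G). Local Notation c := (gc G). Local Notation e := (ge G).
Local Notation m := (gm G). Local Notation p1 := (gp1 G). Local Notation p2 := (gp2 G).
Local Notation i := (gi G). Local Notation K1 := (C1 G). Local Notation K2 := (C2 G).

Lemma composable : d ∘ p1 = c ∘ p2.
Proof. exact (proj1 (ax_pb _ G)). Qed.

Lemma pairing {X : C} (x y : Hom X K1) :
  d ∘ x = c ∘ y -> exists u, p1 ∘ u = x /\ p2 ∘ u = y.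
Proof. exact (pullback_pairing (ax_pb _ G) x y). Qed.

Lemma pair_ext {X : C} (u u' : Hom X K2) : p1 ∘ u = p1 ∘ u' -> p2 ∘ u = p2 ∘ u' -> u = u'.
Proof. exact (pullback_monic (ax_pb _ G) u u'). Qed.

Lemma pair_composable {X : C} (x y : Hom X K1) (u : Hom X K2) :
  p1 ∘ u = x -> p2 ∘ u = y -> d ∘ x = c ∘ y.
Proof. intros <- <-. rewrite !comp_assoc, composable. reflexivity. Qed.

Lemma pair_precomp {X : C} (u0 : Hom K1 K2) (a b : Hom K1 K1) (x : Hom X K1) (u : Hom X K2) :
  p1 ∘ u0 = a -> p2 ∘ u0 = b -> p1 ∘ u = a ∘ x -> p2 ∘ u = b ∘ x -> u = u0 ∘ x.
Proof. intros H1 H2 H3 H4. apply pair_ext; rewrite comp_assoc; congruence. Qed.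

(* An axiom stated for the universal pair <a, b> : C1 -> C2 holds for every
   generalised pair <a x, b x>. *)
Lemma axiom_at (a b r : Hom K1 K1) :
  d ∘ a = c ∘ b ->
  (forall u0, p1 ∘ u0 = a -> p2 ∘ u0 = b -> m ∘ u0 = r) ->
  forall {X : C} (x : Hom X K1) (u : Hom X K2),
    p1 ∘ u = a ∘ x -> p2 ∘ u = b ∘ x -> m ∘ u = r ∘ x.
Proof.
  intros Hab Hax X x u H1 H2.
  destruct (pairing a b Hab) as [u0 [U1 U2]].
  rewrite (pair_precomp u0 a b x u U1 U2 H1 H2), comp_assoc, (Hax u0 U1 U2).
  reflexivity.
Qed.

Lemma unit_r_at {X : C} (x : Hom X K1) (u : Hom X K2) :
  p1 ∘ u = x -> p2 ∘ u = e ∘ (d ∘ x) -> m ∘ u = x.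
Proof.
  intros H1 H2. rewrite <- (comp_id_l _ _ _ x).
  apply (axiom_at (idm K1) (e ∘ d)); [| apply ax_unit_r | rewrite comp_id_l | right_assoc]; auto.
  rewrite comp_id_r. rew (ax_ce _ G). rewrite comp_id_l. reflexivity.
Qed.

Lemma unit_l_at {X : C} (x : Hom X K1) (u : Hom X K2) :
  p1 ∘ u = e ∘ (c ∘ x) -> p2 ∘ u = x -> m ∘ u = x.
Proof.
  intros H1 H2. rewrite <- (comp_id_l _ _ _ x).
  apply (axiom_at (e ∘ c) (idm K1)); [| apply ax_unit_l | right_assoc | rewrite comp_id_l]; auto.
  rewrite comp_id_r. rew (ax_de _ G). rewrite comp_id_l. reflexivity.
Qed.

Lemma inv_r_at {X : C} (x : Hom X K1) (u : Hom X K2) :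
  p1 ∘ u = x -> p2 ∘ u = i ∘ x -> m ∘ u = e ∘ (c ∘ x).
Proof.
  intros H1 H2. rewrite comp_assoc.
  apply (axiom_at (idm K1) i); [| apply ax_inv_r | rewrite comp_id_l |]; auto.
  rewrite comp_id_r, ax_ci. reflexivity.
Qed.

Lemma inv_l_at {X : C} (x : Hom X K1) (u : Hom X K2) :
  p1 ∘ u = i ∘ x -> p2 ∘ u = x -> m ∘ u = e ∘ (d ∘ x).
Proof.
  intros H1 H2. rewrite comp_assoc.
  apply (axiom_at i (idm K1)); [| apply ax_inv_l | | rewrite comp_id_l]; auto.
  rewrite comp_id_r, ax_di. reflexivity.
Qed.

Lemma pairing3 {X : C} (x : Hom X K2) (y : Hom X K1) :
  (d ∘ p2) ∘ x = c ∘ y -> exists t, q1 _ G ∘ t = x /\ q2 _ G ∘ t = y.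
Proof. exact (pullback_pairing (ax_pb3 _ G) x y). Qed.

Lemma assoc_at {X : C} (x y z : Hom X K1) (uxy uyz ua ub : Hom X K2) :
  p1 ∘ uxy = x -> p2 ∘ uxy = y -> p1 ∘ uyz = y -> p2 ∘ uyz = z ->
  p1 ∘ ua = m ∘ uxy -> p2 ∘ ua = z -> p1 ∘ ub = x -> p2 ∘ ub = m ∘ uyz ->
  m ∘ ua = m ∘ ub.
Proof.
  intros H1 H2 H3 H4 H5 H6 H7 H8.
  destruct (ax_pb3 _ G) as [Hc3 _].
  (* the universal triple t = (uxy, z) and the universal composites on C3 *)
  destruct (pairing3 uxy z) as [t [T1 T2]].
  { rew H2. exact (pair_composable y z uyz H3 H4). }
  destruct (pairing (m ∘ q1 _ G) (q2 _ G)) as [a [A1 A2]].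
  { rewrite comp_assoc, (ax_dm _ G). exact Hc3. }
  destruct (pairing (p2 ∘ q1 _ G) (q2 _ G)) as [v [V1 V2]].
  { rewrite comp_assoc. exact Hc3. }
  destruct (pairing (p1 ∘ q1 _ G) (m ∘ v)) as [b [B1 B2]].
  { rewrite !comp_assoc, composable, (ax_cm _ G). rew V1. reflexivity. }
  assert (Ev : v ∘ t = uyz).
  { apply pair_ext; rew V1 || rew V2; rew T1 || rew T2; congruence. }
  assert (Ea : a ∘ t = ua).
  { apply pair_ext; rew A1 || rew A2; rew T1 || rew T2; congruence. }
  assert (Eb : b ∘ t = ub).
  { apply pair_ext.
    - rew B1. rew T1. congruence.
    - rew B2. rewrite Ev. congruence. }
  rewrite <- Ea, <- Eb, !comp_assoc, (ax_assoc _ G a b v A1 A2 V1 V2 B1 B2).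
  reflexivity.
Qed.

Lemma left_inverse_unique {X : C} (z x : Hom X K1) (u : Hom X K2) :
  p1 ∘ u = z -> p2 ∘ u = x -> m ∘ u = e ∘ (d ∘ x) -> z = i ∘ x.
Proof.
  intros H1 H2 H3.
  assert (Hzx := pair_composable z x u H1 H2).
  destruct (pairing x (i ∘ x)) as [w [W1 W2]].
  { rewrite comp_assoc, ax_ci. reflexivity. }
  assert (Hw := inv_r_at x w W1 W2).
  destruct (pairing (m ∘ u) (i ∘ x)) as [ua [A1 A2]].
  { rewrite H3. rew (ax_de _ G). rewrite comp_id_l, comp_assoc, ax_ci. reflexivity. }
  destruct (pairing z (m ∘ w)) as [ub [B1 B2]].
  { rewrite Hw. rew (ax_ce _ G). rewrite comp_id_l. exact Hzx. }
  (* (z x) x^-1 = z (x x^-1) *)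
  assert (E := assoc_at z x (i ∘ x) u w ua ub H1 H2 W1 W2 A1 A2 B1 B2).
  assert (HA : p1 ∘ ua = e ∘ (c ∘ (i ∘ x))).
  { rewrite A1, H3, (comp_assoc _ _ _ _ _ c i), ax_ci. reflexivity. }
  assert (HB : p2 ∘ ub = e ∘ (d ∘ z)).
  { rewrite B2, Hw, Hzx. reflexivity. }
  rewrite (unit_r_at z ub B1 HB), (unit_l_at (i ∘ x) ua HA A2) in E.
  exact (eq_sym E).
Qed.

Lemma idempotent_is_identity {X : C} (y : Hom X K1) (w : Hom X K2) :
  p1 ∘ w = y -> p2 ∘ w = y -> m ∘ w = y -> y = e ∘ (d ∘ y).
Proof.
  intros H1 H2 H3.
  assert (Hyy := pair_composable y y w H1 H2).
  destruct (pairing (i ∘ y) y) as [u [U1 U2]].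
  { rewrite comp_assoc, ax_di. reflexivity. }
  assert (Hu := inv_l_at y u U1 U2).
  destruct (pairing (m ∘ u) y) as [ua [A1 A2]].
  { rewrite Hu. rew (ax_de _ G). rewrite comp_id_l. exact Hyy. }
  (* (y^-1 y) y = y^-1 (y y) = y^-1 y *)
  assert (E := assoc_at (i ∘ y) y y u w ua u U1 U2 H1 H2 A1 A2 U1 (eq_trans U2 (eq_sym H3))).
  assert (HA : p1 ∘ ua = e ∘ (c ∘ y)).
  { rewrite A1, Hu, Hyy. reflexivity. }
  rewrite Hu, (unit_l_at y ua HA A2) in E.
  exact E.
Qed.

Section ThetaPhi.
Variables (theta phi : Hom K2 K2).
Hypothesis Htheta : is_theta G theta.
Hypothesis Hphi : is_phi G phi.

(* m <m <f, g>, g^-1> = f (m <f, g> g^-1 = f). *)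
Lemma m_phi : m ∘ phi = p1.
Proof.
  destruct Hphi as [P1 P2].
  destruct (pairing p2 (i ∘ p2)) as [w [W1 W2]].
  { rewrite comp_assoc, ax_ci. reflexivity. }
  assert (Hw := inv_r_at p2 w W1 W2).
  destruct (pairing p1 (m ∘ w)) as [ub [B1 B2]].
  { rewrite Hw. rew (ax_ce _ G). rewrite comp_id_l. exact composable. }
  rewrite (assoc_at p1 p2 (i ∘ p2) (idm K2) w phi ub (comp_id_r _ _ _ _) (comp_id_r _ _ _ _)
             W1 W2 (eq_trans P1 (eq_sym (comp_id_r _ _ _ _))) P2 B1 B2).
  apply unit_r_at; auto. rewrite B2, Hw, composable. reflexivity.
Qed.

(* m <f^-1, m <f, g>> = g (f^-1 m <f, g> = g). *)
Lemma m_theta : m ∘ theta = p2.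
Proof.
  destruct Htheta as [T1 T2].
  destruct (pairing (i ∘ p1) p1) as [u [U1 U2]].
  { rewrite comp_assoc, ax_di. reflexivity. }
  assert (Hu := inv_l_at p1 u U1 U2).
  destruct (pairing (m ∘ u) p2) as [ua [A1 A2]].
  { rewrite Hu. rew (ax_de _ G). rewrite comp_id_l. exact composable. }
  rewrite <- (assoc_at (i ∘ p1) p1 p2 u (idm K2) ua theta U1 U2
             (comp_id_r _ _ _ _) (comp_id_r _ _ _ _) A1 A2 T1
             (eq_trans T2 (eq_sym (comp_id_r _ _ _ _)))).
  apply unit_l_at; auto. rewrite A1, Hu, composable. reflexivity.
Qed.

(* (theta, phi, m) is an involutive-2-link; joint monicity of m, m theta,
   m phi is that of p2, p1. *)
Lemma theta_phi_link : is_inv2link theta phi m.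
Proof.
  destruct Htheta as [T1 T2]. destruct Hphi as [P1 P2].
  assert (Mp := m_phi). assert (Mt := m_theta).
  assert (Ii := ax_ii _ G).
  split; [|split; [|split]].
  - apply pair_ext; rewrite comp_id_r.
    + rew T1. rew Ii. apply comp_id_l.
    + rew T2. exact Mt.
  - apply pair_ext; rewrite comp_id_r.
    + rew P1. exact Mp.
    + rew P2. rew Ii. apply comp_id_l.
  - (* both sides are <i p2, i p1> *)
    apply pair_ext.
    + rew T1. rew P1. rew Mt. rew P2. reflexivity.
    + rew T2. rew Mp. rew T1. rew P2. rew T2. rew Mp. reflexivity.
  - intros X x y E1 E2 E3. rewrite Mt in E2. rewrite Mp in E3. apply pair_ext; assumption.
Qed.

End ThetaPhi.

End Groupoid.

Section Functors.
Variables (C : Category) (G G' : InternalGroupoid C).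

(* Internal functors preserve inverses: f1 (i a) is a left inverse of f1 a. *)
Lemma functor_preserves_inverse f0 f1 f2 :
  is_internal_functor G G' f0 f1 f2 -> gi G' ∘ f1 = f1 ∘ gi G.
Proof.
  intros (Fd & Fc & Fe & Fm & F1 & F2).
  destruct (pairing C G (gi G) (idm _)) as [u0 [U1 U2]].
  { rewrite comp_id_r, (ax_di _ G). reflexivity. }
  assert (Hu := ax_inv_l _ G u0 U1 U2).
  symmetry. apply (left_inverse_unique C G' (f1 ∘ gi G) f1 (f2 ∘ u0)).
  - rew F1. rewrite U1. reflexivity.
  - rew F2. rewrite U2. apply comp_id_r.
  - rew Fm. rew Hu. rewrite Fd, !comp_assoc, Fe. reflexivity.
Qed.

(* Hence f2 commutes with theta and phi, witnessing that f1 is a morphism of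
   the associated involutive-2-links. *)
Lemma functor_link_morphism theta phi theta' phi' f0 f1 f2 :
  is_theta G theta -> is_phi G phi -> is_theta G' theta' -> is_phi G' phi' ->
  is_internal_functor G G' f0 f1 f2 ->
  is_inv2link_morphism theta phi (gm G) theta' phi' (gm G') f1.
Proof.
  intros [T1 T2] [P1 P2] [T1' T2'] [P1' P2'] HF.
  assert (Fi := functor_preserves_inverse f0 f1 f2 HF).
  destruct HF as (Fd & Fc & Fe & Fm & F1 & F2).
  exists f2. split; [exact Fm | split]; apply (pair_ext C G').
  - rew T1'. rew F1. rew Fi. rew T1. reflexivity.
  - rew T2'. rew F2. rew T2. rew Fm. reflexivity.
  - rew P1'. rew F1. rew P1. rew Fm. reflexivity.
  - rew P2'. rew F2. rew Fi. rew P2. reflexivity.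
Qed.

(* An internal functor is determined by its arrow component:
   f0 = d' f1 e, and f2 is determined by its two projections. *)
Lemma functor_determined_by_arrows f0 g0 f1 f2 g2 :
  is_internal_functor G G' f0 f1 f2 -> is_internal_functor G G' g0 f1 g2 ->
  f0 = g0 /\ f2 = g2.
Proof.
  intros (Fd & Fc & Fe & Fm & F1 & F2) (Gd & Gc & Ge & Gm & G1 & G2). split.
  - rewrite <- (comp_id_r _ _ _ f0), <- (comp_id_r _ _ _ g0), <- (ax_de _ G), !comp_assoc,
      <- Fd, <- Gd. reflexivity.
  - apply (pair_ext C G'); congruence.
Qed.

(* Conversely, a witness fbar of a link morphism f preserves the projections,
   since pi1 = m phi and pi2 = m theta. *)
Lemma link_morphism_projections theta phi theta' phi' f fbar :
  is_theta G theta -> is_phi G phi -> is_theta G' theta' -> is_phi G' phi' ->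
  gm G' ∘ fbar = f ∘ gm G -> theta' ∘ fbar = fbar ∘ theta -> phi' ∘ fbar = fbar ∘ phi ->
  gp1 G' ∘ fbar = f ∘ gp1 G /\ gp2 G' ∘ fbar = f ∘ gp2 G.
Proof.
  intros Ht Hp Ht' Hp' Fm Ft Fp. split.
  - rewrite <- (m_phi C G' phi' Hp'), <- (m_phi C G phi Hp). rew Fp. rewrite comp_assoc, Fm.
    apply eq_sym, comp_assoc.
  - rewrite <- (m_theta C G' theta' Ht'), <- (m_theta C G theta Ht). rew Ft.
    rewrite comp_assoc, Fm. apply eq_sym, comp_assoc.
Qed.

(* The key fact is that f e is an identity arrow,
   being idempotent. *)
Lemma multiplicative_map_is_functor f fbar :
  gm G' ∘ fbar = f ∘ gm G -> gp1 G' ∘ fbar = f ∘ gp1 G -> gp2 G' ∘ fbar = f ∘ gp2 G ->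
  is_internal_functor G G' (gd G' ∘ (f ∘ ge G)) f fbar.
Proof.
  intros Fm F1 F2.
  destruct (pairing C G (ge G) (ge G)) as [w [W1 W2]].
  { rewrite (ax_de _ G), (ax_ce _ G). reflexivity. }
  assert (Hw : gm G ∘ w = ge G).
  { apply unit_r_at; auto. rewrite W2, (ax_de _ G). apply eq_sym, comp_id_r. }
  assert (A1 : gp1 G' ∘ (fbar ∘ w) = f ∘ ge G) by (rew F1; rewrite W1; reflexivity).
  assert (A2 : gp2 G' ∘ (fbar ∘ w) = f ∘ ge G) by (rew F2; rewrite W2; reflexivity).
  assert (A3 : gm G' ∘ (fbar ∘ w) = f ∘ ge G) by (rew Fm; rewrite Hw; reflexivity).
  assert (Hdc := pair_composable C G' _ _ _ A1 A2).
  assert (Hid := idempotent_is_identity C G' _ _ A1 A2 A3).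
  (* d' f = d' f m <1, e d> = d' f p2 <1, e d> = d' f e d, and dually for c *)
  destruct (pairing C G (idm _) (ge G ∘ gd G)) as [u0 [U1 U2]].
  { rewrite comp_id_r. rew (ax_ce _ G). rewrite comp_id_l. reflexivity. }
  destruct (pairing C G (ge G ∘ gc G) (idm _)) as [u1 [V1 V2]].
  { rewrite comp_id_r. rew (ax_de _ G). rewrite comp_id_l. reflexivity. }
  split; [|split; [|split; [|split; [|split]]]]; try assumption.
  - transitivity (gd G' ∘ (f ∘ (gm G ∘ u0))).
    { rewrite (ax_unit_r _ G u0 U1 U2), comp_id_r. reflexivity. }
    rewrite (comp_assoc _ _ _ _ _ f), <- Fm. rew (ax_dm _ G'). rew F2. rew U2. reflexivity.
  - transitivity (gc G' ∘ (f ∘ (gm G ∘ u1))).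
    { rewrite (ax_unit_l _ G u1 V1 V2), comp_id_r. reflexivity. }
    rewrite (comp_assoc _ _ _ _ _ f), <- Fm. rew (ax_cm _ G'). rew F1. rew V1.
    rewrite !comp_assoc in Hdc. rewrite !comp_assoc, Hdc. reflexivity.
  - right_assoc. exact (eq_sym Hid).
Qed.

End Functors.

Theorem proposition3p1 (C : Category) :
  (forall (G : InternalGroupoid C) (theta phi : Hom (C2 G) (C2 G)),
     is_theta G theta -> is_phi G phi ->
     is_inv2link theta phi (gm G) /\
     gm G ∘ phi = gp1 G /\ gm G ∘ theta = gp2 G /\
     gp1 G ∘ phi = gm G /\ gp1 G ∘ theta = gi G ∘ gp1 G /\
     gp2 G ∘ phi = gi G ∘ gp2 G /\ gp2 G ∘ theta = gm G) /\
  (forall (G G' : InternalGroupoid C) (theta phi : Hom (C2 G) (C2 G))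
          (theta' phi' : Hom (C2 G') (C2 G'))
          (f0 : Hom (C0 G) (C0 G')) (f1 : Hom (C1 G) (C1 G')) (f2 : Hom (C2 G) (C2 G')),
     is_theta G theta -> is_phi G phi -> is_theta G' theta' -> is_phi G' phi' ->
     is_internal_functor G G' f0 f1 f2 ->
     is_inv2link_morphism theta phi (gm G) theta' phi' (gm G') f1) /\
  (forall (G G' : InternalGroupoid C)
          (f0 g0 : Hom (C0 G) (C0 G')) (f1 : Hom (C1 G) (C1 G')) (f2 g2 : Hom (C2 G) (C2 G')),
     is_internal_functor G G' f0 f1 f2 -> is_internal_functor G G' g0 f1 g2 ->
     f0 = g0 /\ f2 = g2) /\
  (forall (G G' : InternalGroupoid C) (theta phi : Hom (C2 G) (C2 G))
          (theta' phi' : Hom (C2 G') (C2 G')) (f : Hom (C1 G) (C1 G')),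
     is_theta G theta -> is_phi G phi -> is_theta G' theta' -> is_phi G' phi' ->
     is_inv2link_morphism theta phi (gm G) theta' phi' (gm G') f ->
     exists (f0 : Hom (C0 G) (C0 G')) (f2 : Hom (C2 G) (C2 G')),
       is_internal_functor G G' f0 f f2).
Proof.
  split; [|split; [|split]].
  -
    intros G theta phi Ht Hp.
    refine (conj (theta_phi_link C G theta phi Ht Hp)
              (conj (m_phi C G phi Hp) (conj (m_theta C G theta Ht) _))).
    destruct Ht, Hp. auto.
  -
    exact (functor_link_morphism C).
  -
    exact (functor_determined_by_arrows C).
  -
    intros G G' theta phi theta' phi' f Ht Hp Ht' Hp' [fbar [Fm [Ft Fp]]].
    destruct (link_morphism_projections C G G' theta phi theta' phi' f fbar
                Ht Hp Ht' Hp' Fm Ft Fp) as [F1 F2].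
    exists (gd G' ∘ (f ∘ ge G)), fbar.
    exact (multiplicative_map_is_functor C G G' f fbar Fm F1 F2).
Qed.
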